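(* Let $f$ be a $2\pi$-periodic continuous function with modulus of continuity $\omega(t)$, and let $A=(a_{n,k})$ be a lower triangular infinite matrix of real numbers ($a_{n,k}=0$ for $k>n$) with $a_{n,k}\ge 0$ and $\sum_{k=0}^n a_{n,k}=1$ for all $n$. Let $\beta\ge0$ and suppose \[ \sum_{k=0}^{m-1}(k+1)^{\beta}\left|\frac{a_{n,k}}{(k+1)^{\beta}}-\frac{a_{n,k+1}}{(k+2)^{\beta}}\right|=\mathcal{O}(a_{n,m}) \] for all $m=0,1,\dots,n$ and $n=0,1,\dots$. Suppose there is a function $H(u)\ge0$ such that $\int_u^{\pi} t^{-2}\omega(t)\,dt=\mathcal{O}(H(u))$ as $u\to+0$. Then \[ \|T_{n,A}(f)-f\|=\mathcal{O}\left(\omega\left(\frac{\pi}{n+1}\right)+a_{n,n}H\left(\frac{\pi}{n+1}\right)\right). \] If, in addition, $\int_0^{t}H(u)\,du=\mathcal{O}(tH(t))$ as $t\to+0$, then \[ \|T_{n,A}(f)-f\|=\mathcal{O}\left(a_{n,n}H\left(\frac{\pi}{n+1}\right)\right). \]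
   Context: $S_k(f;x)$ is the $k$-th partial sum of the Fourier series of $f$ at $x$, and $T_{n,A}(f;x):=\sum_{k=0}^n a_{n,k}S_k(f;x)$. $\|\cdot\|$ is the sup-norm. $\omega(\delta)=\sup_{|h|\le\delta}\sup_x|f(x+h)-f(x)|$. The notation $u=\mathcal{O}(v)$ means $u\le Cv$ for a positive constant $C$ (independent of $n$). *)

From Stdlib Require Import Reals.
From Coquelicot Require Import Coquelicot.
Open Scope R_scope.

Fixpoint sumR (F : nat -> R) (m : nat) : R :=
  match m with
  | O => 0
  | S m' => sumR F m' + F m'
  end.

Definition fourier_a (f : R -> R) (j : nat) : R :=
  / PI * RInt (fun t => f t * cos (INR j * t)) (- PI) PI.
Definition fourier_b (f : R -> R) (j : nat) : R :=
  / PI * RInt (fun t => f t * sin (INR j * t)) (- PI) PI.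

Definition S_k (f : R -> R) (k : nat) (x : R) : R :=
  fourier_a f 0 / 2
  + sumR (fun j => fourier_a f (S j) * cos (INR (S j) * x)
                 + fourier_b f (S j) * sin (INR (S j) * x)) k.

Definition T_nA (a : nat -> nat -> R) (f : R -> R) (n : nat) (x : R) : R :=
  sumR (fun k => a n k * S_k f k x) (S n).

Definition modcont (f : R -> R) (delta : R) : R :=
  real (Lub_Rbar (fun y => exists x h, Rabs h <= delta /\ y = Rabs (f (x + h) - f x))).

(* Write e_k = S_k f x - f x, so that T_{n,A} f x - f x = sum_k a_{n,k} e_k. The partial sums
   sum_{k<=j} e_k equal (1/pi) int_{-pi}^{pi} (f (x+u) - f x) F_j u du, where F_j is the sum of the
   first j+1 Dirichlet kernels and 4 sin^2(u/2) F_j u = 1 - cos((j+1)u). Bounding F_j by (j+1)^2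
   on |u| <= h = pi/(n+1) and by 18/u^2 elsewhere gives |sum_{k<=j} e_k| = O(J) for j <= n, with
   J = int_h^pi omega t / t^2 dt; the central contribution (n+1) omega h is itself O(J) since
   omega is nondecreasing. Two summations by parts, against the weights (k+1)^beta and then
   against a_{n,k}/(k+1)^beta, turn the hypothesis on A into |T_{n,A} f - f| = O(a_{n,n} J),
   which is O(a_{n,n} H h). This is the second bound, obtained without its extra hypothesis,
   and it implies the first one. *)

From Stdlib Require Import Reals Lra Lia ZArith.
From Coquelicot Require Import Coquelicot.
Open Scope R_scope.

Lemma sumR_ext (F1 F2 : nat -> R) m :
  (forall k, (k < m)%nat -> F1 k = F2 k) -> sumR F1 m = sumR F2 m.
Proof.
  induction m as [|m IH]; intros HF; simpl; [reflexivity|].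
  rewrite IH, HF; [reflexivity | lia | intros; apply HF; lia].
Qed.

Lemma sumR_le (F1 F2 : nat -> R) m :
  (forall k, (k < m)%nat -> F1 k <= F2 k) -> sumR F1 m <= sumR F2 m.
Proof.
  induction m as [|m IH]; intros HF; simpl; [lra|].
  apply Rplus_le_compat; [apply IH; intros|]; apply HF; lia.
Qed.

Lemma sumR_const c m : sumR (fun _ => c) m = INR m * c.
Proof. induction m as [|m IH]; simpl sumR; [simpl; ring | rewrite IH, S_INR; ring]. Qed.

Lemma sumR_nonneg (F : nat -> R) m : (forall k, (k < m)%nat -> 0 <= F k) -> 0 <= sumR F m.
Proof.
  intros HF. rewrite <- (Rmult_0_r (INR m)), <- sumR_const. apply sumR_le. exact HF.
Qed.

Lemma Rabs_sumR_le (F : nat -> R) m : Rabs (sumR F m) <= sumR (fun k => Rabs (F k)) m.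
Proof.
  induction m as [|m IH]; simpl.
  - rewrite Rabs_R0; lra.
  - eapply Rle_trans; [apply Rabs_triang | lra].
Qed.

Lemma sumR_mult_l c (F : nat -> R) m : c * sumR F m = sumR (fun k => c * F k) m.
Proof. induction m as [|m IH]; simpl; [ring | rewrite <- IH; ring]. Qed.

Lemma sumR_minus (F1 F2 : nat -> R) m :
  sumR F1 m - sumR F2 m = sumR (fun k => F1 k - F2 k) m.
Proof. induction m as [|m IH]; simpl; [ring | rewrite <- IH; ring]. Qed.

Lemma sumR_telescope (c : nat -> R) m : sumR (fun k => c (S k) - c k) m = c m - c O.
Proof. induction m as [|m IH]; simpl; [ring | rewrite IH; ring]. Qed.

Lemma sumR_by_parts (b e : nat -> R) m :
  sumR (fun k => b k * e k) (S m) =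
  sumR (fun k => (b k - b (S k)) * sumR e (S k)) m + b m * sumR e (S m).
Proof.
  induction m as [|m IH]; [simpl; ring|].
  change (sumR (fun k => b k * e k) (S (S m)))
    with (sumR (fun k => b k * e k) (S m) + b (S m) * e (S m)).
  rewrite IH. cbn [sumR]. ring.
Qed.

Lemma abel_inequality (b e c : nat -> R) M n :
  (forall k, (k <= n)%nat -> Rabs (sumR e (S k)) <= c k * M) ->
  (forall k, 0 <= c k) -> 0 <= M ->
  Rabs (sumR (fun k => b k * e k) (S n)) <=
  M * (sumR (fun k => c k * Rabs (b k - b (S k))) n + c n * Rabs (b n)).
Proof.
  intros HE Hc HM. rewrite sumR_by_parts, Rmult_plus_distr_l.
  eapply Rle_trans; [apply Rabs_triang | apply Rplus_le_compat].
  - eapply Rle_trans; [apply Rabs_sumR_le|]. rewrite sumR_mult_l.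
    apply sumR_le. intros k Hk. rewrite Rabs_mult.
    specialize (HE k ltac:(lia)). specialize (Hc k).
    assert (0 <= Rabs (b k - b (S k))) by apply Rabs_pos. nra.
  - rewrite Rabs_mult. specialize (HE n ltac:(lia)). specialize (Hc n).
    assert (0 <= Rabs (b n)) by apply Rabs_pos. nra.
Qed.

Lemma abel_inequality_nondecreasing (c e : nat -> R) M n :
  (forall k, c k <= c (S k)) -> 0 <= c O ->
  (forall k, (k <= n)%nat -> Rabs (sumR e (S k)) <= M) ->
  forall k, (k <= n)%nat -> Rabs (sumR (fun i => c i * e i) (S k)) <= c k * (2 * M).
Proof.
  intros Hc Hc0 HE k Hk.
  assert (HM : 0 <= M) by (eapply Rle_trans; [apply Rabs_pos | apply (HE O); lia]).
  assert (Hck : forall i, 0 <= c i) by (induction i; [lra | specialize (Hc i); lra]).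
  rewrite sumR_by_parts. eapply Rle_trans; [apply Rabs_triang|].
  assert (Hsum : Rabs (sumR (fun i => (c i - c (S i)) * sumR e (S i)) k) <= (c k - c O) * M).
  { eapply Rle_trans; [apply Rabs_sumR_le|].
    rewrite <- sumR_telescope, Rmult_comm, sumR_mult_l.
    apply sumR_le. intros i Hi. specialize (Hc i). specialize (HE i ltac:(lia)).
    rewrite Rabs_mult, Rabs_minus_sym, Rabs_right, (Rmult_comm M) by lra.
    apply Rmult_le_compat_l; lra. }
  assert (Hlast : Rabs (c k * sumR e (S k)) <= c k * M).
  { specialize (Hck k). specialize (HE k Hk). rewrite Rabs_mult, Rabs_right by lra.
    apply Rmult_le_compat_l; lra. }
  assert (0 <= c O * M) by (apply Rmult_le_pos; auto). lra.
Qed.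

Lemma weighted_mean_bound (a c e : nat -> R) K M n :
  (forall k, 0 < c k) -> (forall k, c k <= c (S k)) -> 0 <= a n ->
  sumR (fun k => c k * Rabs (a k / c k - a (S k) / c (S k))) n <= K * a n ->
  (forall k, (k <= n)%nat -> Rabs (sumR e (S k)) <= M) ->
  Rabs (sumR (fun k => a k * e k) (S n)) <= 2 * M * ((K + 1) * a n).
Proof.
  intros Hc Hmono Han HK HE.
  assert (HM : 0 <= M) by (eapply Rle_trans; [apply Rabs_pos | apply (HE O); lia]).
  assert (Hce := abel_inequality_nondecreasing c e M n Hmono (Rlt_le _ _ (Hc O)) HE).
  assert (Hab := abel_inequality (fun k => a k / c k) (fun k => c k * e k) c (2 * M) n Hce
                   (fun k => Rlt_le _ _ (Hc k)) ltac:(lra)).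
  assert (Hlast : c n * Rabs (a n / c n) = a n).
  { specialize (Hc n). rewrite Rabs_right; [field; lra|].
    apply Rle_ge, Rdiv_le_0_compat; lra. }
  cbv beta in Hab. rewrite Hlast in Hab.
  replace (sumR (fun k => a k * e k) (S n))
    with (sumR (fun k => a k / c k * (c k * e k)) (S n)).
  - eapply Rle_trans; [exact Hab|]. apply Rmult_le_compat_l; lra.
  - apply sumR_ext. intros k _. specialize (Hc k). field. lra.
Qed.

Lemma real_Lub_Rbar_spec (E : R -> Prop) (y0 B : R) :
  E y0 -> (forall y, E y -> y <= B) ->
  (forall y, E y -> y <= real (Lub_Rbar E)) /\ real (Lub_Rbar E) <= B.
Proof.
  intros Hy0 HB. destruct (Lub_Rbar_correct E) as [Hub Hlub].
  destruct (Lub_Rbar E) as [r| |].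
  - split; [exact Hub | apply (Hlub (Finite B)); exact HB].
  - exfalso. apply (Hlub (Finite B)). exact HB.
  - exfalso. exact (Hub y0 Hy0).
Qed.

Section Periodic.
Variable g : R -> R.
Hypothesis g_per : forall x, g (x + 2 * PI) = g x.

Lemma periodic_nat k x : g (x + INR k * (2 * PI)) = g x.
Proof.
  induction k as [|k IH]; [simpl INR; rewrite Rmult_0_l, Rplus_0_r; reflexivity|].
  replace (x + INR (S k) * (2 * PI)) with ((x + INR k * (2 * PI)) + 2 * PI)
    by (rewrite S_INR; ring).
  rewrite g_per. exact IH.
Qed.

Lemma periodic_Z m x : g (x + IZR m * (2 * PI)) = g x.
Proof.
  destruct m as [|p|p].
  - f_equal. simpl. ring.
  - rewrite <- positive_nat_Z, <- INR_IZR_INZ. apply periodic_nat.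
  - rewrite <- (periodic_nat (Pos.to_nat p) (x + IZR (Z.neg p) * (2 * PI))).
    f_equal. rewrite INR_IZR_INZ, positive_nat_Z, <- Pos2Z.opp_pos, opp_IZR. ring.
Qed.

Lemma periodic_representative x :
  exists y, 0 <= y <= 2 * PI /\ forall h, g (x + h) = g (y + h).
Proof.
  assert (Hp : 0 < 2 * PI) by (generalize PI_RGT_0; lra).
  set (m := (up (x / (2 * PI)) - 1)%Z).
  assert (Hm : IZR m * (2 * PI) <= x <= IZR m * (2 * PI) + 2 * PI).
  { destruct (archimed (x / (2 * PI))) as [H1 H2].
    set (q := x / (2 * PI)) in *. set (u := IZR (up q)) in *.
    assert (Hx : x = q * (2 * PI)) by (unfold q; field; lra).
    unfold m. rewrite minus_IZR. fold u. rewrite Hx.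
    assert ((u - 1) * (2 * PI) <= q * (2 * PI)) by (apply Rmult_le_compat_r; lra).
    assert (q * (2 * PI) <= u * (2 * PI)) by (apply Rmult_le_compat_r; lra).
    lra. }
  exists (x - IZR m * (2 * PI)). split; [lra|].
  intros h. rewrite <- (periodic_Z m (x - IZR m * (2 * PI) + h)). f_equal. ring.
Qed.

End Periodic.

Section ModulusOfContinuity.
Variable f : R -> R.
Hypothesis f_cont : forall x, continuous f x.
Hypothesis f_per : forall x, f (x + 2 * PI) = f x.

Lemma periodic_bounded : exists M, forall x, Rabs (f x) <= M.
Proof.
  assert (Hc : forall c, 0 <= c <= 2 * PI -> continuity_pt f c)
    by (intros c _; apply continuity_pt_filterlim, f_cont).
  assert (Hle : 0 <= 2 * PI) by (generalize PI_RGT_0; lra).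
  destruct (continuity_ab_maj f 0 (2 * PI) Hle Hc) as [xmax [Hmax _]].
  destruct (continuity_ab_min f 0 (2 * PI) Hle Hc) as [xmin [Hmin _]].
  exists (Rabs (f xmax) + Rabs (f xmin)). intros x.
  destruct (periodic_representative f f_per x) as [y [Hy Hxy]].
  specialize (Hxy 0). rewrite !Rplus_0_r in Hxy. rewrite Hxy.
  specialize (Hmax y Hy). specialize (Hmin y Hy).
  generalize (Rle_abs (f xmax)) (Rle_abs (- f xmin)) (Rabs_pos (f xmax)) (Rabs_pos (f xmin)).
  rewrite Rabs_Ropp.
  intros. apply Rabs_le. split; lra.
Qed.

Lemma periodic_uniformly_continuous eps : 0 < eps -> exists delta, 0 < delta /\
  forall x h, Rabs h < delta -> Rabs (f (x + h) - f x) < eps.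
Proof.
  intros Heps.
  assert (Hc : forall c, - (2 * PI) <= c <= 4 * PI -> continuity_pt f c)
    by (intros c _; apply continuity_pt_filterlim, f_cont).
  destruct (Heine_cor2 Hc (mkposreal eps Heps)) as [d Hd].
  exists (Rmin d PI). split; [apply Rmin_pos; [apply cond_pos | apply PI_RGT_0]|].
  intros x h Hh. destruct (periodic_representative f f_per x) as [y [Hy Hxy]].
  rewrite (Hxy h), <- (Rplus_0_r x), Hxy, Rplus_0_r.
  assert (Hd' : Rabs h < d) by (generalize (Rmin_l d PI); lra).
  assert (HPI : Rabs h < PI) by (generalize (Rmin_r d PI); lra).
  apply Rabs_lt_between in HPI. generalize PI_RGT_0; intros.
  apply (Hd (y + h) y); simpl; [lra | lra | now replace (y + h - y) with h by ring].
Qed.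

Lemma modcont_spec d B : 0 <= d ->
  (forall x h, Rabs h <= d -> Rabs (f (x + h) - f x) <= B) ->
  (forall x h, Rabs h <= d -> Rabs (f (x + h) - f x) <= modcont f d) /\ modcont f d <= B.
Proof.
  intros Hd HB. unfold modcont.
  destruct (real_Lub_Rbar_spec
              (fun y => exists x h, Rabs h <= d /\ y = Rabs (f (x + h) - f x)) 0 B)
    as [Hub Hlub].
  - exists 0, 0. rewrite Rabs_R0, Rplus_0_r, Rminus_diag, Rabs_R0. auto.
  - intros y (x & h & Hh & ->). auto.
  - split; [|exact Hlub]. intros x h Hh. apply Hub. eauto.
Qed.

Lemma modcont_ge d x h : Rabs h <= d -> Rabs (f (x + h) - f x) <= modcont f d.
Proof.
  intros Hh. destruct periodic_bounded as [M HM].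
  apply (modcont_spec d (2 * M)); [generalize (Rabs_pos h); lra | | exact Hh].
  intros y k _. eapply Rle_trans; [apply Rabs_triang|].
  rewrite Rabs_Ropp. generalize (HM (y + k)) (HM y). lra.
Qed.

Lemma modcont_le d B : 0 <= d ->
  (forall x h, Rabs h <= d -> Rabs (f (x + h) - f x) <= B) -> modcont f d <= B.
Proof. intros Hd HB. apply (modcont_spec d B Hd HB). Qed.

Lemma modcont_nonneg d : 0 <= d -> 0 <= modcont f d.
Proof.
  intros Hd. eapply Rle_trans; [apply Rabs_pos | apply (modcont_ge d 0 0)].
  rewrite Rabs_R0. exact Hd.
Qed.

Lemma modcont_le_compat s t : 0 <= s <= t -> modcont f s <= modcont f t.
Proof. intros Hst. apply modcont_le; [lra|]. intros x h Hh. apply modcont_ge. lra. Qed.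

Lemma modcont_subadditive s t : 0 <= s -> 0 <= t ->
  modcont f (s + t) <= modcont f s + modcont f t.
Proof.
  intros Hs Ht. apply modcont_le; [lra|]. intros x h Hh.
  destruct (Rle_dec (Rabs h) s) as [Hhs|Hhs].
  { generalize (modcont_ge s x h Hhs) (modcont_nonneg t Ht). lra. }
  set (h1 := if Rle_dec 0 h then s else - s).
  assert (Hh1 : Rabs h1 <= s /\ Rabs (h - h1) <= t).
  { unfold h1. destruct (Rle_dec 0 h).
    - rewrite Rabs_right in Hh, Hhs by lra. rewrite !Rabs_right; lra.
    - rewrite Rabs_left in Hh, Hhs by lra. rewrite Rabs_Ropp, Rabs_right, Rabs_left; lra. }
  replace (f (x + h) - f x)
    with ((f ((x + h1) + (h - h1)) - f (x + h1)) + (f (x + h1) - f x))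
    by (replace (x + h1 + (h - h1)) with (x + h) by ring; ring).
  eapply Rle_trans; [apply Rabs_triang|].
  generalize (modcont_ge t (x + h1) (h - h1) (proj2 Hh1)) (modcont_ge s x h1 (proj1 Hh1)).
  lra.
Qed.

Lemma modcont_continuous t : 0 < t -> continuous (modcont f) t.
Proof.
  intros Ht. apply filterlim_locally. intros eps.
  destruct (periodic_uniformly_continuous (eps / 2)) as [del [Hdel Hunif]].
  { generalize (cond_pos eps); lra. }
  exists (mkposreal (Rmin del t) (Rmin_pos _ _ Hdel Ht)). intros s Hs.
  change (Rabs (s - t) < Rmin del t) in Hs. change (Rabs (modcont f s - modcont f t) < eps).
  set (d := Rabs (s - t)).
  assert (Hd : 0 <= d) by apply Rabs_pos.
  assert (Hdt : d < Rmin del t) by exact Hs.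
  assert (Hs0 : 0 < s)
    by (generalize (Rmin_r del t) (Rle_abs (t - s)); rewrite Rabs_minus_sym; fold d; lra).
  assert (Hsmall : modcont f d <= eps / 2).
  { apply modcont_le; [exact Hd|]. intros x h Hh. left. apply Hunif.
    generalize (Rmin_l del t); lra. }
  assert (modcont f s <= modcont f (t + d)).
  { apply modcont_le_compat. generalize (Rle_abs (s - t)); fold d; lra. }
  assert (modcont f t <= modcont f (s + d)).
  { apply modcont_le_compat. generalize (Rle_abs (t - s)); rewrite Rabs_minus_sym; fold d; lra. }
  generalize (modcont_subadditive t d (Rlt_le _ _ Ht) Hd)
             (modcont_subadditive s d (Rlt_le _ _ Hs0) Hd) (cond_pos eps).
  intros. apply Rabs_def1; lra.
Qed.

End ModulusOfContinuity.

(* [dirichlet_sum j] is (j + 1) times the Fejer kernel. *)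
Definition dirichlet (k : nat) (u : R) : R := 1 / 2 + sumR (fun j => cos (INR (S j) * u)) k.
Definition dirichlet_sum (j : nat) (u : R) : R := sumR (fun k => dirichlet k u) (S j).

Lemma dirichlet_S k u : dirichlet (S k) u = dirichlet k u + cos (INR (S k) * u).
Proof. unfold dirichlet. cbn [sumR]. ring. Qed.

Lemma dirichlet_mul_sin k u : 2 * sin (u / 2) * dirichlet k u = sin (INR k * u + u / 2).
Proof.
  induction k as [|k IH].
  - unfold dirichlet. cbn [sumR INR]. replace (0 * u + u / 2) with (u / 2) by ring. field.
  - rewrite dirichlet_S, Rmult_plus_distr_l, IH, S_INR.
    replace (INR k * u + u / 2) with ((INR k + 1) * u - u / 2) by field.
    rewrite sin_minus, sin_plus. ring.
Qed.

Lemma dirichlet_mul_sin_sq k u :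
  4 * sin (u / 2) ^ 2 * dirichlet k u = cos (INR k * u) - cos (INR (S k) * u).
Proof.
  replace (4 * sin (u / 2) ^ 2 * dirichlet k u)
    with (2 * sin (u / 2) * (2 * sin (u / 2) * dirichlet k u)) by ring.
  rewrite dirichlet_mul_sin, S_INR.
  replace ((INR k + 1) * u) with (INR k * u + 2 * (u / 2)) by field.
  rewrite sin_plus, cos_plus, cos_2a_sin, sin_2a. ring.
Qed.

Lemma dirichlet_sum_mul_sin_sq j u :
  4 * sin (u / 2) ^ 2 * dirichlet_sum j u = 1 - cos (INR (S j) * u).
Proof.
  unfold dirichlet_sum. induction j as [|j IH].
  - cbn [sumR]. rewrite Rplus_0_l, dirichlet_mul_sin_sq. simpl INR. rewrite Rmult_0_l, cos_0. ring.
  - cbn [sumR] in IH |- *. rewrite Rmult_plus_distr_l, IH, dirichlet_mul_sin_sq. ring.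
Qed.

Lemma Rabs_dirichlet_le k u : Rabs (dirichlet k u) <= INR k + 1.
Proof.
  unfold dirichlet. eapply Rle_trans; [apply Rabs_triang|].
  rewrite Rabs_right by lra.
  enough (Rabs (sumR (fun j => cos (INR (S j) * u)) k) <= INR k) by lra.
  eapply Rle_trans; [apply Rabs_sumR_le|].
  rewrite <- (Rmult_1_r (INR k)), <- sumR_const.
  apply sumR_le. intros. apply Rabs_le, COS_bound.
Qed.

Lemma Rabs_dirichlet_sum_le j u : Rabs (dirichlet_sum j u) <= (INR j + 1) ^ 2.
Proof.
  unfold dirichlet_sum. eapply Rle_trans; [apply Rabs_sumR_le|].
  eapply Rle_trans; [apply (sumR_le _ (fun _ => INR j + 1))|].
  - intros k Hk. eapply Rle_trans; [apply Rabs_dirichlet_le|].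
    apply Rplus_le_compat_r, le_INR. lia.
  - rewrite sumR_const, S_INR. lra.
Qed.

Lemma sin_ge_third a : 0 <= a <= 2 -> a / 3 <= sin a.
Proof.
  intros Ha. assert (HP : a <= PI) by (generalize PI2_1; lra).
  destruct (sin_bound a 0 (proj1 Ha) HP) as [Hlow _].
  unfold sin_approx, sin_term in Hlow. simpl in Hlow.
  assert (a * (a * a) <= 4 * a) by nra. lra.
Qed.

Lemma Rabs_sin_half_ge u : Rabs u <= PI -> Rabs u / 6 <= Rabs (sin (u / 2)).
Proof.
  intros Hu. generalize PI_RGT_0 PI_4 (Rabs_pos u). intros.
  assert (Hodd : Rabs (sin (u / 2)) = Rabs (sin (Rabs u / 2))).
  { destruct (Rle_or_lt 0 u).
    - rewrite (Rabs_right u) by lra. reflexivity.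
    - rewrite (Rabs_left u) by lra.
      replace (- u / 2) with (- (u / 2)) by field. rewrite sin_neg, Rabs_Ropp. reflexivity. }
  rewrite Hodd, (Rabs_right (sin _)) by (apply Rle_ge, sin_ge_0; lra).
  assert (Rabs u / 2 / 3 <= sin (Rabs u / 2)) by (apply sin_ge_third; lra). lra.
Qed.

Lemma Rabs_dirichlet_sum_le_inv_sq j u : 0 < Rabs u <= PI ->
  Rabs (dirichlet_sum j u) <= 18 / (u * u).
Proof.
  intros Hu.
  assert (Huu : u * u = Rabs u * Rabs u) by (rewrite <- Rabs_mult, Rabs_right; nra).
  assert (Hsin : u * u / 9 <= 4 * sin (u / 2) ^ 2).
  { assert (Hs := Rabs_sin_half_ge u (proj2 Hu)).
    rewrite Huu, <- (pow2_abs (sin (u / 2))). nra. }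
  assert (Hcos : Rabs (4 * sin (u / 2) ^ 2 * dirichlet_sum j u) <= 2).
  { rewrite dirichlet_sum_mul_sin_sq.
    apply Rabs_le. generalize (COS_bound (INR (S j) * u)). lra. }
  assert (Hpos : 0 < u * u) by (rewrite Huu; apply Rmult_lt_0_compat; lra).
  rewrite Rabs_mult, (Rabs_right (4 * _)) in Hcos by (apply Rle_ge; nra).
  apply (Rmult_le_reg_l (u * u / 9)); [lra|].
  replace (u * u / 9 * (18 / (u * u))) with 2
    by (field; intros Hu0; rewrite Hu0 in Hpos; lra).
  eapply Rle_trans; [|exact Hcos]. apply Rmult_le_compat_r; [apply Rabs_pos | lra].
Qed.

Ltac continuous_by_derive :=
  apply (@ex_derive_continuous R_AbsRing R_NormedModule); auto_derive; auto.

Lemma continuous_sumR (G : nat -> R -> R) m u : (forall j, continuous (G j) u) ->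
  continuous (fun u => sumR (fun j => G j u) m) u.
Proof.
  intros HG. induction m as [|m IH]; [apply continuous_const|].
  apply (continuous_plus (fun u => sumR (fun j => G j u) m) (G m)); auto.
Qed.

Lemma dirichlet_continuous k u : continuous (dirichlet k) u.
Proof.
  apply (continuous_plus (fun _ => 1 / 2) (fun u => sumR (fun j => cos (INR (S j) * u)) k)).
  - apply continuous_const.
  - apply continuous_sumR. intros j. continuous_by_derive.
Qed.

Lemma dirichlet_sum_continuous j u : continuous (dirichlet_sum j) u.
Proof. apply continuous_sumR. intros. apply dirichlet_continuous. Qed.

Lemma dirichlet_periodic k u : dirichlet k (u + 2 * PI) = dirichlet k u.
Proof.
  unfold dirichlet. f_equal. apply sumR_ext. intros j _.
  replace (INR (S j) * (u + 2 * PI)) with (INR (S j) * u + 2 * INR (S j) * PI) by ring.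
  apply cos_period.
Qed.

Lemma is_RInt_sumR (G : nat -> R -> R) (v : nat -> R) a b m :
  (forall k, is_RInt (G k) a b (v k)) ->
  is_RInt (fun u => sumR (fun k => G k u) m) a b (sumR v m).
Proof.
  intros HG. induction m as [|m IH].
  - replace (sumR v 0) with (scal (b - a) 0) by (cbn; ring).
    apply (@is_RInt_const R_NormedModule).
  - apply (@is_RInt_plus R_NormedModule (fun u => sumR (fun k => G k u) m) (G m)); auto.
Qed.

Lemma sin_INR_mult_PI k : sin (INR k * PI) = 0.
Proof.
  induction k as [|k IH]; [simpl; rewrite Rmult_0_l; apply sin_0|].
  rewrite S_INR, Rmult_plus_distr_r, Rmult_1_l, sin_plus, IH, sin_PI. ring.
Qed.

Lemma is_RInt_cos_harmonic k : is_RInt (fun u => cos (INR (S k) * u)) (- PI) PI 0.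
Proof.
  set (m := INR (S k)).
  assert (Hm : m <> 0) by (apply not_0_INR; lia).
  replace 0 with (minus (sin (m * PI) / m) (sin (m * - PI) / m)).
  - apply (is_RInt_derive (fun u => sin (m * u) / m)).
    + intros u _. auto_derive; [auto | field; exact Hm].
    + intros u _. continuous_by_derive.
  - unfold m. rewrite Ropp_mult_distr_r_reverse, sin_neg, sin_INR_mult_PI.
    unfold minus, plus, opp. simpl. field. exact Hm.
Qed.

Lemma is_RInt_dirichlet k : is_RInt (dirichlet k) (- PI) PI PI.
Proof.
  replace PI with (plus (scal (PI - - PI) (1 / 2)) (sumR (fun _ => 0) k)) at 3
    by (rewrite sumR_const; cbn; field).
  apply (@is_RInt_plus R_NormedModule (fun _ => 1 / 2)).
  - apply (@is_RInt_const R_NormedModule).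
  - apply (is_RInt_sumR (fun j u => cos (INR (S j) * u))). apply is_RInt_cos_harmonic.
Qed.

Lemma RInt_periodic_shift (p : R -> R) x :
  (forall t, continuous p t) -> (forall t, p (t + 2 * PI) = p t) ->
  RInt (fun u => p (x + u)) (- PI) PI = RInt p (- PI) PI.
Proof.
  intros Hc Hp.
  assert (Hex : forall a b, ex_RInt p a b)
    by (intros; apply (@ex_RInt_continuous R_CompleteNormedModule); intros; apply Hc).
  assert (Htranslate : forall d a b, RInt (fun u => p (u + d)) a b = RInt p (a + d) (b + d)).
  { intros d a b. rewrite <- (Rmult_1_l a) at 2. rewrite <- (Rmult_1_l b) at 2.
    rewrite <- RInt_comp_lin by apply Hex.
    apply RInt_ext. intros u _. cbn. rewrite !Rmult_1_l. reflexivity. }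
  assert (Hwrap : RInt p PI (PI + x) = RInt p (- PI) (- PI + x)).
  { replace PI with (- PI + 2 * PI) at 1 by ring.
    replace (PI + x) with (- PI + x + 2 * PI) by ring.
    rewrite <- Htranslate. apply RInt_ext. intros u _. apply Hp. }
  rewrite (RInt_ext _ (fun u => p (u + x))) by (intros; f_equal; ring).
  rewrite Htranslate.
  rewrite <- (RInt_Chasles p (- PI + x) PI (PI + x)), Hwrap by apply Hex.
  rewrite <- (RInt_Chasles p (- PI) (- PI + x) PI) by apply Hex.
  apply plus_comm.
Qed.

Section FourierPartialSums.
Variable f : R -> R.
Hypothesis f_cont : forall x, continuous f x.
Hypothesis f_per : forall x, f (x + 2 * PI) = f x.

Lemma is_RInt_fourier_mode m x :
  is_RInt (fun t => f t * cos (INR m * (t - x))) (- PI) PI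
    (PI * (fourier_a f m * cos (INR m * x) + fourier_b f m * sin (INR m * x))).
Proof.
  set (Ia := RInt (fun t => f t * cos (INR m * t)) (- PI) PI).
  set (Ib := RInt (fun t => f t * sin (INR m * t)) (- PI) PI).
  assert (Ha : is_RInt (fun t => f t * cos (INR m * t)) (- PI) PI Ia).
  { apply (@RInt_correct R_CompleteNormedModule), (@ex_RInt_continuous R_CompleteNormedModule).
    intros t _. apply (continuous_mult f); [apply f_cont | continuous_by_derive]. }
  assert (Hb : is_RInt (fun t => f t * sin (INR m * t)) (- PI) PI Ib).
  { apply (@RInt_correct R_CompleteNormedModule), (@ex_RInt_continuous R_CompleteNormedModule).
    intros t _. apply (continuous_mult f); [apply f_cont | continuous_by_derive]. }
  assert (Hab : is_RInt (fun t => cos (INR m * x) * (f t * cos (INR m * t))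
                                  + sin (INR m * x) * (f t * sin (INR m * t))) (- PI) PI
                  (cos (INR m * x) * Ia + sin (INR m * x) * Ib))
    by exact (@is_RInt_plus R_NormedModule _ _ _ _ _ _
                (@is_RInt_scal R_NormedModule _ _ _ _ _ Ha)
                (@is_RInt_scal R_NormedModule _ _ _ _ _ Hb)).
  replace (PI * (fourier_a f m * cos (INR m * x) + fourier_b f m * sin (INR m * x)))
    with (cos (INR m * x) * Ia + sin (INR m * x) * Ib)
    by (unfold fourier_a, fourier_b; fold Ia Ib; field; apply PI_neq0).
  refine (is_RInt_ext _ _ _ _ _ (fun t _ => _ : @eq R _ _) Hab).
  replace (INR m * (t - x)) with (INR m * t - INR m * x) by ring.
  rewrite cos_minus. ring.
Qed.

Lemma is_RInt_fourier_dirichlet k x :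
  is_RInt (fun t => f t * dirichlet k (t - x)) (- PI) PI (PI * S_k f k x).
Proof.
  set (mode := fun j => PI * (fourier_a f j * cos (INR j * x) + fourier_b f j * sin (INR j * x))).
  assert (Hsum : is_RInt (fun t => 1 / 2 * (f t * cos (INR 0 * (t - x)))
                                   + sumR (fun j => f t * cos (INR (S j) * (t - x))) k) (- PI) PI
                   (1 / 2 * mode 0%nat + sumR (fun j => mode (S j)) k))
    by exact (@is_RInt_plus R_NormedModule _ _ _ _ _ _
                (@is_RInt_scal R_NormedModule _ _ _ _ _ (is_RInt_fourier_mode 0 x))
                (is_RInt_sumR (fun j t => f t * cos (INR (S j) * (t - x))) _ (- PI) PI k
                   (fun j => is_RInt_fourier_mode (S j) x))).
  replace (PI * S_k f k x) with (1 / 2 * mode 0%nat + sumR (fun j => mode (S j)) k).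
  - refine (is_RInt_ext _ _ _ _ _ (fun t _ => _ : @eq R _ _) Hsum).
    unfold dirichlet. change (INR 0) with 0.
    rewrite Rmult_0_l, cos_0, Rmult_plus_distr_l, sumR_mult_l. ring.
  - unfold S_k. rewrite Rmult_plus_distr_l, sumR_mult_l.
    unfold mode. change (INR 0) with 0. rewrite Rmult_0_l, cos_0, sin_0. field.
Qed.

Lemma is_RInt_partial_sum_error k x :
  is_RInt (fun u => (f (x + u) - f x) * dirichlet k u) (- PI) PI (PI * (S_k f k x - f x)).
Proof.
  set (p := fun t => f t * dirichlet k (t - x)).
  assert (Hp : forall t, continuous p t).
  { intros t. apply (continuous_mult f); [apply f_cont|].
    apply (continuous_comp (fun t => t - x) (dirichlet k)); [continuous_by_derive|].
    apply dirichlet_continuous. }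
  assert (Hshift : is_RInt (fun u => p (x + u)) (- PI) PI (PI * S_k f k x)).
  { rewrite <- (is_RInt_unique _ _ _ _ (is_RInt_fourier_dirichlet k x)).
    fold p. rewrite <- (RInt_periodic_shift p x Hp).
    - apply (@RInt_correct R_CompleteNormedModule), (@ex_RInt_continuous R_CompleteNormedModule).
      intros u _. apply (continuous_comp (fun u => x + u) p); [continuous_by_derive | apply Hp].
    - intros t. unfold p. rewrite f_per. f_equal.
      replace (t + 2 * PI - x) with (t - x + 2 * PI) by ring. apply dirichlet_periodic. }
  assert (Herr := @is_RInt_minus R_NormedModule _ _ _ _ _ _ Hshift
                    (@is_RInt_scal R_NormedModule _ _ _ (f x) _ (is_RInt_dirichlet k))).
  replace (PI * (S_k f k x - f x)) with (PI * S_k f k x - f x * PI) by ring.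
  refine (is_RInt_ext _ _ _ _ _ (fun u _ => _ : @eq R _ _) Herr).
  unfold p. replace (x + u - x) with u by ring. cbn. ring.
Qed.

Lemma is_RInt_partial_sums_error j x :
  is_RInt (fun u => (f (x + u) - f x) * dirichlet_sum j u) (- PI) PI
    (PI * sumR (fun k => S_k f k x - f x) (S j)).
Proof.
  rewrite sumR_mult_l.
  refine (is_RInt_ext _ _ _ _ _ (fun u _ => _ : @eq R _ _)
            (is_RInt_sumR (fun k u => (f (x + u) - f x) * dirichlet k u) _ _ _ _
               (fun k => is_RInt_partial_sum_error k x))).
  unfold dirichlet_sum. rewrite sumR_mult_l. reflexivity.
Qed.

End FourierPartialSums.

Lemma Rabs_RInt_le_RInt (g w : R -> R) a b :
  a <= b -> ex_RInt g a b -> ex_RInt w a b ->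
  (forall u, a < u < b -> Rabs (g u) <= w u) -> Rabs (RInt g a b) <= RInt w a b.
Proof.
  intros Hab Hg Hw Hgw. apply Rabs_le. split.
  - assert (Hlow : RInt (fun u => opp (w u)) a b <= RInt g a b).
    { apply RInt_le; auto.
      - apply (@ex_RInt_opp R_NormedModule), Hw.
      - intros u Hu. specialize (Hgw u Hu). apply Rabs_le_between in Hgw. cbn. lra. }
    rewrite (@RInt_opp R_CompleteNormedModule) in Hlow by exact Hw.
    change (opp (RInt w a b)) with (- RInt w a b) in Hlow. lra.
  - apply RInt_le; auto. intros u Hu. specialize (Hgw u Hu). apply Rabs_le_between in Hgw. lra.
Qed.

Lemma RInt_reflect (g : R -> R) a b : (forall u, continuous g u) ->
  RInt g (- b) (- a) = RInt (fun u => g (- u)) a b.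
Proof.
  intros Hg.
  assert (Hex : ex_RInt g (- a) (- b))
    by (apply (@ex_RInt_continuous R_CompleteNormedModule); intros; apply Hg).
  assert (Hex' : ex_RInt (fun u => g (- u)) a b).
  { apply (@ex_RInt_continuous R_CompleteNormedModule). intros u _.
    apply (continuous_comp Ropp g); [continuous_by_derive | apply Hg]. }
  assert (Href := is_RInt_unique _ _ _ _ (@is_RInt_comp_opp R_NormedModule g a b _
                    (@RInt_correct R_CompleteNormedModule _ _ _ Hex))).
  rewrite (@RInt_opp R_CompleteNormedModule) in Href by exact Hex'.
  rewrite <- (@opp_RInt_swap R_CompleteNormedModule) by exact Hex.
  rewrite <- Href. apply opp_opp.
Qed.

Definition modcont_weight (f : R -> R) (t : R) : R := modcont f t / (t * t).

Section ErrorKernelBound.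
Variable f : R -> R.
Hypothesis f_cont : forall x, continuous f x.
Hypothesis f_per : forall x, f (x + 2 * PI) = f x.

Lemma modcont_weight_continuous t : 0 < t -> continuous (modcont_weight f) t.
Proof.
  intros Ht.
  apply (continuous_mult (modcont f) (fun t => / (t * t))).
  - exact (modcont_continuous f f_cont f_per t Ht).
  - apply continuous_Rinv_comp; [continuous_by_derive | nra].
Qed.

Lemma ex_RInt_modcont_weight a b : 0 < a -> 0 < b -> ex_RInt (modcont_weight f) a b.
Proof.
  intros Ha Hb. apply (@ex_RInt_continuous R_CompleteNormedModule). intros t Ht.
  apply modcont_weight_continuous. generalize (Rmin_pos a b Ha Hb). lra.
Qed.

Lemma modcont_le_RInt_weight h : 0 < h <= PI ->
  modcont f h * (/ h - / PI) <= RInt (modcont_weight f) h PI.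
Proof.
  intros Hh. set (c := modcont f h).
  assert (Hint : is_RInt (fun t => c / (t * t)) h PI (c * (/ h - / PI))).
  { replace (c * (/ h - / PI)) with (minus (- c / PI) (- c / h)) by (cbn; field; lra).
    apply (@is_RInt_derive R_CompleteNormedModule (fun t => - c / t)).
    - intros t Ht. rewrite Rmin_left, Rmax_right in Ht by lra.
      auto_derive; [lra | field; lra].
    - intros t Ht. rewrite Rmin_left, Rmax_right in Ht by lra.
      apply (continuous_mult (fun _ => c) (fun t => / (t * t))); [apply continuous_const|].
      apply continuous_Rinv_comp; [continuous_by_derive | nra]. }
  rewrite <- (is_RInt_unique _ _ _ _ Hint).
  apply RInt_le; [lra | eexists; exact Hint | apply ex_RInt_modcont_weight; lra |].
  intros t Ht. apply Rmult_le_compat_r.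
  - apply Rlt_le, Rinv_0_lt_compat. nra.
  - apply modcont_le_compat; auto. lra.
Qed.

Section ErrorKernel.
Variables (j : nat) (x h : R).
Hypothesis Hh : 0 < h <= PI.

Let g (u : R) : R := (f (x + u) - f x) * dirichlet_sum j u.

Lemma error_kernel_continuous u : continuous g u.
Proof.
  apply (continuous_mult (fun u => f (x + u) - f x) (dirichlet_sum j));
    [|apply dirichlet_sum_continuous].
  apply (continuous_plus (fun u => f (x + u)) (fun _ => - f x)); [|apply continuous_const].
  apply (continuous_comp (fun u => x + u) f); [continuous_by_derive | apply f_cont].
Qed.

Lemma error_kernel_near u : Rabs u <= h -> Rabs (g u) <= (INR j + 1) ^ 2 * modcont f h.
Proof.
  intros Hu. unfold g. rewrite Rabs_mult, (Rmult_comm ((INR j + 1) ^ 2)).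
  apply Rmult_le_compat; try apply Rabs_pos.
  - apply modcont_ge; assumption.
  - apply Rabs_dirichlet_sum_le.
Qed.

Lemma error_kernel_far u : h <= Rabs u <= PI ->
  Rabs (g u) <= 18 * modcont_weight f (Rabs u).
Proof.
  intros Hu. unfold g, modcont_weight. rewrite Rabs_mult.
  replace (Rabs u * Rabs u) with (u * u) by (rewrite <- Rabs_mult, Rabs_right; nra).
  replace (18 * (modcont f (Rabs u) / (u * u))) with (modcont f (Rabs u) * (18 / (u * u)))
    by (unfold Rdiv; ring).
  apply Rmult_le_compat; try apply Rabs_pos.
  - apply modcont_ge; auto. lra.
  - apply Rabs_dirichlet_sum_le_inv_sq. lra.
Qed.

Lemma Rabs_RInt_error_kernel_tail (p : R -> R) : (forall u, continuous p u) ->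
  (forall u, h < u < PI -> Rabs (p u) <= 18 * modcont_weight f u) ->
  Rabs (RInt p h PI) <= 18 * RInt (modcont_weight f) h PI.
Proof.
  intros Hcont Hbound.
  rewrite <- (@RInt_scal R_CompleteNormedModule) by (apply ex_RInt_modcont_weight; lra).
  apply Rabs_RInt_le_RInt; [lra | | | exact Hbound].
  - apply (@ex_RInt_continuous R_CompleteNormedModule). intros; apply Hcont.
  - apply (@ex_RInt_scal R_CompleteNormedModule), ex_RInt_modcont_weight; lra.
Qed.

Lemma Rabs_RInt_error_kernel_le :
  Rabs (RInt g (- PI) PI)
  <= 2 * h * ((INR j + 1) ^ 2 * modcont f h) + 36 * RInt (modcont_weight f) h PI.
Proof.
  assert (Hex : forall a b, ex_RInt g a b)
    by (intros; apply (@ex_RInt_continuous R_CompleteNormedModule);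
        intros; apply error_kernel_continuous).
  rewrite <- (RInt_Chasles g (- PI) (- h) PI), <- (RInt_Chasles g (- h) h PI) by apply Hex.
  assert (Hmid : Rabs (RInt g (- h) h) <= 2 * h * ((INR j + 1) ^ 2 * modcont f h)).
  { replace (2 * h) with (h - - h) by ring.
    apply abs_RInt_le_const; [lra | apply Hex |].
    intros u Hu. apply error_kernel_near, Rabs_le. lra. }
  assert (Hright : Rabs (RInt g h PI) <= 18 * RInt (modcont_weight f) h PI).
  { apply Rabs_RInt_error_kernel_tail; [apply error_kernel_continuous|].
    intros u Hu. replace u with (Rabs u) at 2 by (apply Rabs_right; lra).
    apply error_kernel_far. rewrite Rabs_right; lra. }
  assert (Hleft : Rabs (RInt g (- PI) (- h)) <= 18 * RInt (modcont_weight f) h PI).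
  { rewrite RInt_reflect by apply error_kernel_continuous.
    apply Rabs_RInt_error_kernel_tail.
    - intros u. apply (continuous_comp Ropp g);
        [continuous_by_derive | apply error_kernel_continuous].
    - intros u Hu. replace u with (Rabs (- u)) at 2 by (rewrite Rabs_Ropp; apply Rabs_right; lra).
      apply error_kernel_far. rewrite Rabs_Ropp, Rabs_right; lra. }
  eapply Rle_trans; [apply Rabs_triang|].
  eapply Rle_trans; [apply Rplus_le_compat_l, Rabs_triang|].
  lra.
Qed.

End ErrorKernel.
End ErrorKernelBound.

Lemma PI_div_INR_S_range n : 0 < PI / INR (S n) <= PI.
Proof.
  assert (HPI := PI_RGT_0). assert (Hn := pos_INR n). rewrite S_INR.
  split; [apply Rdiv_lt_0_compat; lra|].
  apply Rmult_le_reg_r with (INR n + 1); [lra|]. field_simplify; nra.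
Qed.

Lemma central_term_le_RInt_weight f n j :
  (forall x, continuous f x) -> (forall x, f (x + 2 * PI) = f x) ->
  (1 <= n)%nat -> (j <= n)%nat ->
  2 * (PI / INR (S n)) * ((INR j + 1) ^ 2 * modcont f (PI / INR (S n)))
  <= 4 * PI * PI * RInt (modcont_weight f) (PI / INR (S n)) PI.
Proof.
  intros f_cont f_per Hn Hj.
  set (h := PI / INR (S n)). set (w := modcont f h).
  assert (HPI := PI_RGT_0).
  assert (Hn' : 1 <= INR n) by (apply (le_INR 1); exact Hn).
  assert (Hj' : INR j <= INR n) by (apply le_INR; exact Hj).
  assert (Hh := PI_div_INR_S_range n). fold h in Hh.
  assert (Hw : 0 <= w) by (apply modcont_nonneg; auto; lra).
  assert (HJ := modcont_le_RInt_weight f f_cont f_per h Hh). fold w in HJ.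
  replace (/ h - / PI) with (INR n / PI) in HJ by (unfold h; rewrite S_INR; field; lra).
  assert (Hjn : 2 * h * ((INR j + 1) ^ 2 * w) <= 2 * h * ((INR n + 1) ^ 2 * w)).
  { apply Rmult_le_compat_l, Rmult_le_compat_r, pow_incr; generalize (pos_INR j); lra. }
  replace (2 * h * ((INR n + 1) ^ 2 * w)) with (2 * PI * (INR n + 1) * w) in Hjn
    by (unfold h; rewrite S_INR; field; lra).
  assert (Hnn : 2 * PI * (INR n + 1) * w <= 4 * PI * PI * (w * (INR n / PI))).
  { replace (4 * PI * PI * (w * (INR n / PI))) with (2 * PI * (2 * INR n) * w) by (field; lra).
    apply Rmult_le_compat_r, Rmult_le_compat_l; lra. }
  assert (4 * PI * PI * (w * (INR n / PI)) <= 4 * PI * PI * RInt (modcont_weight f) h PI)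
    by (apply Rmult_le_compat_l; nra).
  lra.
Qed.

Lemma Rabs_sum_partial_sums_error_le f n j x :
  (forall x, continuous f x) -> (forall x, f (x + 2 * PI) = f x) ->
  (1 <= n)%nat -> (j <= n)%nat ->
  Rabs (sumR (fun k => S_k f k x - f x) (S j))
  <= (4 * PI + 36 / PI) * RInt (modcont_weight f) (PI / INR (S n)) PI.
Proof.
  intros f_cont f_per Hn Hj.
  assert (HPI := PI_RGT_0).
  assert (Hmid := central_term_le_RInt_weight f n j f_cont f_per Hn Hj).
  assert (Hint := Rabs_RInt_error_kernel_le f f_cont f_per j x _ (PI_div_INR_S_range n)).
  rewrite (is_RInt_unique _ _ _ _ (is_RInt_partial_sums_error f f_cont f_per j x)),
          Rabs_mult, (Rabs_right PI) in Hint by lra.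
  set (J := RInt (modcont_weight f) (PI / INR (S n)) PI) in *.
  apply (Rmult_le_reg_l PI); [lra|].
  replace (PI * ((4 * PI + 36 / PI) * J)) with (4 * PI * PI * J + 36 * J) by (field; lra).
  lra.
Qed.

Lemma T_nA_sub_eq (a : nat -> nat -> R) f n x : sumR (fun k => a n k) (S n) = 1 ->
  T_nA a f n x - f x = sumR (fun k => a n k * (S_k f k x - f x)) (S n).
Proof.
  intros Hsum. unfold T_nA.
  replace (f x) with (f x * sumR (fun k => a n k) (S n)) at 1 by (rewrite Hsum; ring).
  rewrite sumR_mult_l, sumR_minus. apply sumR_ext. intros k _. ring.
Qed.

Lemma Rabs_T_nA_sub_le f (a : nat -> nat -> R) beta K n x :
  (forall x, continuous f x) -> (forall x, f (x + 2 * PI) = f x) ->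
  (forall k, 0 <= a n k) -> sumR (fun k => a n k) (S n) = 1 -> 0 <= beta ->
  sumR (fun k => Rpower (INR k + 1) beta *
          Rabs (a n k / Rpower (INR k + 1) beta - a n (S k) / Rpower (INR k + 2) beta)) n
  <= K * a n n ->
  (1 <= n)%nat ->
  Rabs (T_nA a f n x - f x)
  <= 2 * (4 * PI + 36 / PI) * ((K + 1) * a n n) * RInt (modcont_weight f) (PI / INR (S n)) PI.
Proof.
  intros f_cont f_per Ha Hsum Hbeta HK Hn.
  set (c := fun k => Rpower (INR k + 1) beta).
  assert (Hc : forall k, 0 < c k) by (intros; apply exp_pos).
  assert (Hmono : forall k, c k <= c (S k)).
  { intros k. apply Rle_Rpower_l; [exact Hbeta|]. rewrite S_INR. generalize (pos_INR k). lra. }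
  assert (HKc : sumR (fun k => c k * Rabs (a n k / c k - a n (S k) / c (S k))) n <= K * a n n).
  { erewrite sumR_ext; [exact HK|]. intros k _. unfold c. rewrite S_INR.
    replace (INR k + 1 + 1) with (INR k + 2) by ring. reflexivity. }
  rewrite T_nA_sub_eq by exact Hsum.
  eapply Rle_trans.
  - apply (weighted_mean_bound (a n) c (fun k => S_k f k x - f x) K
             ((4 * PI + 36 / PI) * RInt (modcont_weight f) (PI / INR (S n)) PI) n
             Hc Hmono (Ha n) HKc).
    intros j Hj. apply Rabs_sum_partial_sums_error_le; assumption.
  - right. ring.
Qed.

Lemma PI_div_INR_S_eventually_lt del : 0 < del ->
  exists N, (1 <= N)%nat /\ forall n, (N <= n)%nat -> PI / INR (S n) < del.
Proof.
  intros Hdel. assert (HPI := PI_RGT_0).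
  destruct (archimed_cor1 (del / PI)) as (N & HN & HN0); [apply Rdiv_lt_0_compat; lra|].
  exists N. split; [lia|]. intros n Hn.
  assert (HNn : INR N <= INR (S n)) by (apply le_INR; lia).
  assert (HN' : 0 < INR N) by (apply lt_0_INR; lia).
  apply (Rmult_lt_reg_r (/ PI)); [apply Rinv_0_lt_compat; lra|].
  replace (PI / INR (S n) * / PI) with (/ INR (S n)) by (field; lra).
  apply (Rle_lt_trans _ (/ INR N)); [apply Rinv_le_contravar; lra | exact HN].
Qed.

Lemma T_nA_error_eventually_le f (a : nat -> nat -> R) beta (H : R -> R) K CH del :
  (forall x, continuous f x) -> (forall x, f (x + 2 * PI) = f x) ->
  (forall n k, 0 <= a n k) -> (forall n, sumR (fun k => a n k) (S n) = 1) -> 0 <= beta ->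
  (forall n m : nat, (m <= n)%nat ->
      sumR (fun k => Rpower (INR k + 1) beta *
              Rabs (a n k / Rpower (INR k + 1) beta - a n (S k) / Rpower (INR k + 2) beta)) m
      <= K * a n m) ->
  0 < del -> (forall u, 0 < u < del -> RInt (modcont_weight f) u PI <= CH * H u) ->
  exists N, forall n, (N <= n)%nat -> forall x,
    Rabs (T_nA a f n x - f x)
    <= 2 * (4 * PI + 36 / PI) * (K + 1) * CH * (a n n * H (PI / INR (S n))).
Proof.
  intros f_cont f_per Ha Hsum Hbeta HK Hdel HH.
  destruct (PI_div_INR_S_eventually_lt del Hdel) as (N & HN1 & HN).
  exists N. intros n Hn x.
  assert (HKa : 0 <= K * a n n).
  { eapply Rle_trans; [|apply (HK n n); lia]. apply sumR_nonneg. intros k _.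
    apply Rmult_le_pos; [apply Rlt_le, exp_pos | apply Rabs_pos]. }
  eapply Rle_trans; [apply (Rabs_T_nA_sub_le f a beta K); auto; lia|].
  replace (2 * (4 * PI + 36 / PI) * (K + 1) * CH * (a n n * H (PI / INR (S n))))
    with (2 * (4 * PI + 36 / PI) * ((K + 1) * a n n) * (CH * H (PI / INR (S n)))) by ring.
  apply Rmult_le_compat_l.
  - assert (0 < 36 / PI) by (apply Rdiv_lt_0_compat; [lra | apply PI_RGT_0]).
    generalize PI_RGT_0 (Ha n n). nra.
  - apply HH. split; [apply PI_div_INR_S_range | apply HN, Hn].
Qed.

Theorem theorem3p2
  (f : R -> R) (a : nat -> nat -> R) (beta : R) (H : R -> R)
  (f_cont : forall x, continuous f x)
  (f_per : forall x, f (x + 2 * PI) = f x)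
  (a_low : forall n k, (n < k)%nat -> a n k = 0)
  (a_nonneg : forall n k, 0 <= a n k)
  (a_sum : forall n, sumR (fun k => a n k) (S n) = 1)
  (beta_ge0 : 0 <= beta)
  (a_cond : exists K : R, forall n m : nat, (m <= n)%nat ->
      sumR (fun k => Rpower (INR k + 1) beta *
              Rabs (a n k / Rpower (INR k + 1) beta
                    - a n (S k) / Rpower (INR k + 2) beta)) m
      <= K * a n m)
  (H_nonneg : forall u, 0 < u -> 0 <= H u)
  (H_cond : exists C delta : R, 0 < delta /\ forall u, 0 < u < delta ->
      RInt (fun t => modcont f t / (t * t)) u PI <= C * H u) :
  (exists C : R, exists N : nat, forall n : nat, (N <= n)%nat -> forall x,
      Rabs (T_nA a f n x - f x)
      <= C * (modcont f (PI / INR (S n)) + a n n * H (PI / INR (S n))))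
  /\
  ((exists C delta : R, 0 < delta /\ forall t, 0 < t < delta ->
      exists v, is_RInt_gen H (at_right 0) (at_point t) v /\ v <= C * (t * H t)) ->
   exists C : R, exists N : nat, forall n : nat, (N <= n)%nat -> forall x,
      Rabs (T_nA a f n x - f x) <= C * (a n n * H (PI / INR (S n)))).
Proof.
  destruct a_cond as [K HK]. destruct H_cond as (CH & del & Hdel & HH).
  destruct (T_nA_error_eventually_le f a beta H K CH del f_cont f_per a_nonneg a_sum beta_ge0
              HK Hdel HH) as (N & Hbound).
  set (C := 2 * (4 * PI + 36 / PI) * (K + 1) * CH) in Hbound.
  split.
  - exists (Rabs C), N. intros n Hn x.
    assert (Hh := PI_div_INR_S_range n).
    assert (0 <= a n n * H (PI / INR (S n)))
      by (apply Rmult_le_pos; [apply a_nonneg | apply H_nonneg, Hh]).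
    assert (0 <= modcont f (PI / INR (S n))) by (apply modcont_nonneg; auto; lra).
    eapply Rle_trans; [apply Hbound, Hn|].
    eapply Rle_trans; [apply Rmult_le_compat_r; [lra | apply Rle_abs]|].
    apply Rmult_le_compat_l; [apply Rabs_pos | lra].
  - intros _. exists C, N. exact Hbound.
Qed.
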